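(* Assume $P$ is symmetric and transitive, and let $X_t=(\Phi^* )^t(I-J)$ for $t\ge0$. Then for every $t\ge0$: (1) $X_t\in\mathrm{Span}\{P^k,J:0\le k\le 2t\}$; in particular all diagonal entries of $X_t$ are equal, to a common value denoted $r_t$; (2) $X_{t+1}=P_qX_tP_q+q^2r_t\,(I-P^2)$.
   Context: $P$ is a row-stochastic $N\times N$ matrix, $q\in[0,1]$, $P_q=(1-q)I+qP$, $J=\mathbf 1\mathbf 1^\top/N$. $P$ is transitive if for every pair $(i,j)$ there is a permutation matrix $\Pi$ with $\Pi_{ij}=1$ and $\Pi P\Pi^{-1}=P$. $\beta_1,\dots,\beta_N$ are independent random variables in $\{1,\dots,N\}$ with $\mathbb P(\beta_i=j)=p_{ij}$, $e_i$ the standard basis vectors, $K=(1-q)I+q\sum_ie_ie_{\beta_i}^\top$, $\Phi(X)=\mathbb E[KXK^\top]$, and $\Phi^*$ is its adjoint with respect to $\langle A,B\rangle=\mathrm{Tr}(AB^\top)$; $(\Phi^* )^t$ is the $t$-fold composition. *)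

From mathcomp Require Import all_boot all_order all_fingroup all_algebra.
Set Implicit Arguments. Unset Strict Implicit. Unset Printing Implicit Defensive.
Import Order.TTheory GRing.Theory Num.Theory.
Local Open Scope ring_scope.

(* Matrices are N x N with N = n.+1 (so N >= 1 and J is well defined). *)
Section Defs.
Variables (R : realFieldType) (n : nat).
Local Notation N := n.+1.
Local Notation M := 'M[R]_N.

Definition row_stochastic (P : M) : Prop :=
  (forall i j, 0 <= P i j) /\ (forall i, \sum_j P i j = 1).

Definition symmetric_mx (P : M) : Prop := P^T = P.

Definition transitive_mx (P : M) : Prop :=
  forall i j : 'I_N, exists s : 'S_N,
    perm_mx (R:=R) s i j = 1 /\ perm_mx s *m P *m invmx (perm_mx s) = P.

Definition Pq (q : R) (P : M) : M := (1 - q) *: 1%:M + q *: P.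

Definition Jmx : M := (N%:R)^-1 *: const_mx 1.

Definition Kmx (q : R) (b : {ffun 'I_N -> 'I_N}) : M :=
  (1 - q) *: 1%:M + q *: \sum_i delta_mx i (b i).

(* probability of the outcome beta, beta_i independent with P(beta_i = j) = p_ij *)
Definition prob_beta (P : M) (b : {ffun 'I_N -> 'I_N}) : R :=
  \prod_i P i (b i).

Definition Phi (q : R) (P : M) (X : M) : M :=
  \sum_(b : {ffun 'I_N -> 'I_N}) prob_beta P b *: (Kmx q b *m X *m (Kmx q b)^T).

Definition PhiAdj (q : R) (P : M) (Y : M) : M :=
  \sum_(b : {ffun 'I_N -> 'I_N}) prob_beta P b *: ((Kmx q b)^T *m Y *m Kmx q b).

Definition Xt (q : R) (P : M) (t : nat) : M := iter t (PhiAdj q P) (1%:M - Jmx).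

Lemma PhiAdj_adjoint (q : R) (P X Y : M) :
  \tr (Phi q P X *m Y^T) = \tr (X *m (PhiAdj q P Y)^T).
Proof.
rewrite /Phi /PhiAdj !mulmx_suml raddf_sum /= linear_sum /= mulmx_sumr raddf_sum /=.
apply: eq_bigr => b _.
rewrite -!scalemxAl mxtraceZ linearZ /= -scalemxAr mxtraceZ; congr (_ * _).
rewrite !trmx_mul !trmxK !mulmxA mxtrace_mulC !mulmxA.
by rewrite -mulmxA mxtrace_mulC !mulmxA.
Qed.
End Defs.

From mathcomp Require Import all_boot all_order all_fingroup all_algebra.
From mathcomp Require Import ring zify.
Import Order.TTheory GRing.Theory Num.Theory.
Local Open Scope ring_scope.
Set Implicit Arguments. Unset Strict Implicit.

(* The heart of the argument is the second-moment computation for the random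
   matrix K: since the beta_i are independent with laws given by the rows of P,
     E[K_aj K_cl] = (P_q)_aj (P_q)_cl + [a = c] q^2 ([j = l] P_aj - P_aj P_al),
   which gives, for every Y, the entrywise formula
     Phi^*(Y) = P_q^T Y P_q + q^2 sum_a Y_aa (diag(P_a) - P_a^T P_a).
   When P is symmetric (hence doubly stochastic) and Y has constant diagonal r,
   the correction collapses to q^2 r (I - P^2): this is part (2).
   Part (1) follows by induction: if X_t = p(P) + d J with deg p <= 2t, then
   P_q J P_q = J and P_q = (1 - q) + q P give X_(t+1) = p'(P) + d J with
   deg p' <= 2t + 2; and every p(P) + d J has a constant diagonal because the
   permutation symmetries of a transitive P are also symmetries of p(P). *)

Section Expectation.
Variables (R : realFieldType) (n : nat).
Local Notation N := n.+1.
Variable P : 'M[R]_N.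
Hypothesis P_rowsum : forall i, \sum_j P i j = 1.

Definition expect (F : {ffun 'I_N -> 'I_N} -> R) : R :=
  \sum_(b : {ffun 'I_N -> 'I_N}) prob_beta P b * F b.

Lemma expect_prod (H : 'I_N -> 'I_N -> R) :
  expect (fun b => \prod_i H i (b i)) = \prod_i \sum_j P i j * H i j.
Proof.
rewrite bigA_distr_bigA /=; apply: eq_bigr => b _.
by rewrite /prob_beta -big_split.
Qed.

Lemma prod_supp1 (a : 'I_N) (F : 'I_N -> R) :
  (forall i, i != a -> F i = 1) -> \prod_i F i = F a.
Proof. by move=> F1; rewrite (bigD1 a) //= big1 ?mulr1. Qed.

Lemma prod_supp2 (a c : 'I_N) (F : 'I_N -> R) : a != c ->
  (forall i, i != a -> i != c -> F i = 1) -> \prod_i F i = F a * F c.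
Proof.
move=> ac F1; rewrite (bigD1 a) //= (bigD1 c) 1?eq_sym //= mulrA big1 ?mulr1 //.
by move=> i /andP[ia ic]; apply: F1.
Qed.

Lemma expect_single (a : 'I_N) (h : 'I_N -> R) :
  expect (fun b => h (b a)) = \sum_x P a x * h x.
Proof.
pose H i x := if i == a then h x else 1.
have eqH b : h (b a) = \prod_i H i (b i).
  by rewrite (@prod_supp1 a) /H ?eqxx // => i /negbTE->.
transitivity (expect (fun b => \prod_i H i (b i))).
  by apply: eq_bigr => b _; rewrite eqH.
rewrite expect_prod.
rewrite (@prod_supp1 a) /H ?eqxx // => i /negbTE->.
by rewrite -[RHS](P_rowsum i); apply: eq_bigr => x _; rewrite mulr1.
Qed.

Lemma expect_indep (a c : 'I_N) (f g : 'I_N -> R) : a != c ->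
  expect (fun b => f (b a) * g (b c))
  = (\sum_x P a x * f x) * (\sum_x P c x * g x).
Proof.
move=> ac; have ca : c != a by rewrite eq_sym.
pose H i x := if i == a then f x else if i == c then g x else 1.
have eqH b : f (b a) * g (b c) = \prod_i H i (b i).
  by rewrite (prod_supp2 ac) /H ?eqxx ?(negbTE ca) // => i /negbTE-> /negbTE->.
transitivity (expect (fun b => \prod_i H i (b i))).
  by apply: eq_bigr => b _; rewrite eqH.
rewrite expect_prod.
rewrite (prod_supp2 ac) /H ?eqxx ?(negbTE ca) // => i /negbTE-> /negbTE->.
by rewrite -[RHS](P_rowsum i); apply: eq_bigr => x _; rewrite mulr1.
Qed.

Lemma eq_expect (F G : {ffun 'I_N -> 'I_N} -> R) :
  (forall b, F b = G b) -> expect F = expect G.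
Proof. by move=> FG; apply: eq_bigr => b _; rewrite FG. Qed.

Lemma mean_indicator (a j : 'I_N) : \sum_x P a x * (x == j)%:R = P a j.
Proof.
by rewrite (bigD1 j) //= eqxx mulr1 big1 ?addr0 // => x /negbTE->; rewrite mulr0.
Qed.

Lemma mean_affine1 (a j : 'I_N) (u v : R) :
  \sum_x P a x * (u + v * (x == j)%:R) = u + v * P a j.
Proof.
transitivity (\sum_x (u * P a x + v * (P a x * (x == j)%:R))).
  by apply: eq_bigr => x _; ring.
by rewrite big_split /= -!mulr_sumr P_rowsum mean_indicator mulr1.
Qed.

Lemma mean_indicator2 (a j l : 'I_N) :
  \sum_x P a x * ((x == j)%:R * (x == l)%:R) = (j == l)%:R * P a j.
Proof.
rewrite (bigD1 j) //= eqxx mul1r big1 ?addr0 => [|x /negbTE->]; last first.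
  by rewrite mul0r mulr0.
by have [->|] := eqVneq j l; rewrite ?mulr1 ?mul1r ?mulr0 ?mul0r.
Qed.

Lemma mean_quadratic (a j l : 'I_N) (u v w z : R) :
  \sum_x P a x * (u + v * (x == j)%:R + w * (x == l)%:R
                  + z * ((x == j)%:R * (x == l)%:R))
  = u + v * P a j + w * P a l + z * ((j == l)%:R * P a j).
Proof.
transitivity (\sum_x (P a x * (u + v * (x == j)%:R) + w * (P a x * (x == l)%:R)
                + z * (P a x * ((x == j)%:R * (x == l)%:R)))).
  by apply: eq_bigr => x _; ring.
by rewrite !big_split /= mean_affine1 -!mulr_sumr mean_indicator mean_indicator2.
Qed.

End Expectation.

Section SecondMoment.
Variables (R : realFieldType) (n : nat) (q : R).
Local Notation N := n.+1.
Variable P : 'M[R]_N.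
Hypothesis P_rowsum : forall i, \sum_j P i j = 1.

Lemma KmxE (b : {ffun 'I_N -> 'I_N}) (a j : 'I_N) :
  Kmx q b a j = (1 - q) * (a == j)%:R + q * (b a == j)%:R.
Proof.
rewrite /Kmx !mxE summxE (bigD1 a) //= big1 ?addr0 => [|i /negbTE ia].
  by rewrite mxE eqxx /= [b a == j]eq_sym.
by rewrite mxE eq_sym ia.
Qed.

Lemma PqE (a j : 'I_N) : Pq q P a j = (1 - q) * (a == j)%:R + q * P a j.
Proof. by rewrite /Pq !mxE. Qed.

(* Second moments of the random matrix K: entries in distinct rows are
   uncorrelated, two entries of the same row a have the covariance of the
   indicators of [b a = j] and [b a = l], scaled by q^2. *)
Lemma expect_K2 (a c j l : 'I_N) :
  expect P (fun b => Kmx q b a j * Kmx q b c l)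
  = Pq q P a j * Pq q P c l
    + (a == c)%:R * q ^+ 2 * ((j == l)%:R * P a j - P a j * P a l).
Proof.
pose kf (a j x : 'I_N) := (1 - q) * (a == j)%:R + q * (x == j)%:R.
have eqK b : Kmx q b a j * Kmx q b c l = kf a j (b a) * kf c l (b c).
  by rewrite !KmxE.
rewrite (eq_expect _ eqK); have [<-|ac] := eqVneq a c; last first.
  by rewrite expect_indep // !mean_affine1 // !PqE !mul0r addr0.
apply: eq_trans (expect_single P_rowsum a (fun x => kf a j x * kf a l x)) _.
transitivity (\sum_x P a x * ((1 - q) ^+ 2 * (a == j)%:R * (a == l)%:R
   + q * (1 - q) * (a == l)%:R * (x == j)%:R
   + q * (1 - q) * (a == j)%:R * (x == l)%:R
   + q ^+ 2 * ((x == j)%:R * (x == l)%:R))).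
  by apply: eq_bigr => x _; rewrite /kf; ring.
by rewrite mean_quadratic // !PqE /= mul1r; ring.
Qed.

Lemma PhiAdj_entry (Y : 'M[R]_N) (j l : 'I_N) :
  PhiAdj q P Y j l
  = \sum_c \sum_a Y a c * expect P (fun b => Kmx q b a j * Kmx q b c l).
Proof.
rewrite /PhiAdj summxE /expect.
transitivity (\sum_(b : {ffun 'I_N -> 'I_N}) \sum_c \sum_a
                prob_beta P b * (Y a c * (Kmx q b a j * Kmx q b c l))).
  apply: eq_bigr => b _; rewrite !mxE mulr_sumr; apply: eq_bigr => c _.
  rewrite !mxE big_distrl mulr_sumr /=; apply: eq_bigr => a _.
  by rewrite !mxE; ring.
rewrite exchange_big; apply: eq_bigr => c _; rewrite exchange_big.
by apply: eq_bigr => a _; rewrite mulr_sumr; apply: eq_bigr => b _; ring.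
Qed.

Lemma PhiAdjE (Y : 'M[R]_N) (j l : 'I_N) :
  PhiAdj q P Y j l = ((Pq q P)^T *m Y *m Pq q P) j l
    + q ^+ 2 * \sum_a Y a a * ((j == l)%:R * P a j - P a j * P a l).
Proof.
rewrite PhiAdj_entry.
under eq_bigr => c _ do under eq_bigr => a _ do rewrite expect_K2 mulrDr.
under eq_bigr => c _ do rewrite big_split /=.
rewrite big_split /=; congr (_ + _).
  rewrite mxE; apply: eq_bigr => c _; rewrite [(_ *m _) j c]mxE big_distrl /=.
  by apply: eq_bigr => a _; rewrite [_^T j a]mxE; ring.
rewrite mulr_sumr; apply: eq_bigr => c _.
rewrite (bigD1 c) //= eqxx big1 ?addr0 => [|a /negbTE->].
  by rewrite /= mul1r mulrCA mulrA.
by rewrite !mul0r mulr0.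
Qed.

End SecondMoment.

Section Symmetric.
Variables (R : realFieldType) (n : nat) (q : R).
Local Notation N := n.+1.
Variable P : 'M[R]_N.
Hypothesis P_rowsum : forall i, \sum_j P i j = 1.
Hypothesis P_sym : symmetric_mx P.

Lemma P_symE (i j : 'I_N) : P j i = P i j.
Proof. by rewrite -[in LHS]P_sym mxE. Qed.

Lemma P_colsum (j : 'I_N) : \sum_i P i j = 1.
Proof. by rewrite -(P_rowsum j); apply: eq_bigr => i _; rewrite P_symE. Qed.

Lemma Pq_sym : (Pq q P)^T = Pq q P.
Proof. by rewrite /Pq linearD !linearZ /= trmx1 P_sym. Qed.

Lemma PhiAdj_const_diag (Y : 'M[R]_N) (r : R) : (forall i, Y i i = r) ->
  PhiAdj q P Y = Pq q P *m Y *m Pq q P + (q ^+ 2 * r) *: (1%:M - P ^+ 2).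
Proof.
move=> Yr; apply/matrixP => j l; rewrite PhiAdjE // Pq_sym [RHS]mxE; congr (_ + _).
rewrite !mxE -mulrA; congr (_ * _).
under eq_bigr do rewrite Yr; rewrite -mulr_sumr; congr (_ * _).
rewrite sumrB -mulr_sumr P_colsum mulr1; congr (_ - _).
by apply: eq_bigr => a _; rewrite P_symE.
Qed.
End Symmetric.

Section Transitive.
Variables (R : realFieldType) (n : nat).
Local Notation N := n.+1.

Lemma perm_mx_entry (s : 'S_N) (i j : 'I_N) :
  perm_mx (R:=R) s i j = (s i == j)%:R.
Proof. by rewrite /perm_mx !mxE. Qed.

Lemma conj_perm_diag (A : 'M[R]_N) (s : 'S_N) :
  perm_mx s *m A *m invmx (perm_mx s) = A -> forall i, A (s i) (s i) = A i i.
Proof.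
have invP : invmx (perm_mx s) = perm_mx s^-1 :> 'M[R]_N by rewrite perm_mxV.
move=> sA i; rewrite -{2}sA invP -col_permE -row_permE.
by rewrite !mxE.
Qed.

(* For a transitive P every polynomial in P has a constant diagonal:
   the symmetry of P moving i to 0 is also a symmetry of p(P). *)
Lemma horner_transitive_diag (P : 'M[R]_N) (p : {poly R}) :
  transitive_mx P -> forall i, horner_mx P p i i = horner_mx P p ord0 ord0.
Proof.
move=> trP i; have [s [si0 sP]] := trP i ord0.
have {si0}si0 : s i = ord0.
  apply/eqP; move: si0; rewrite perm_mx_entry.
  by case: eqP => // _ /eqP; rewrite eq_sym oner_eq0.
rewrite -si0 conj_perm_diag // -horner_mx_uconj ?sP //; exact: unitmx_perm.
Qed.

Lemma horner_mx_sum (A : 'M[R]_N) (p : {poly R}) (m : nat) : (size p <= m)%N ->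
  horner_mx A p = \sum_(k < m) p`_k *: A ^+ k.
Proof.
move=> size_p; have {1}-> : p = \poly_(k < m) p`_k.
  apply/polyP => k; rewrite coef_poly; case: ltnP => // mk.
  by rewrite nth_default // (leq_trans size_p mk).
rewrite poly_def linear_sum; apply: eq_bigr => k _.
by rewrite linearZ /= rmorphXn /= horner_mx_X.
Qed.

End Transitive.

Section Averaging.
Variables (R : realFieldType) (n : nat).
Local Notation N := n.+1.

Lemma Jmx_entry (i j : 'I_N) : @Jmx R n i j = N%:R^-1.
Proof. by rewrite !mxE mulr1. Qed.

Lemma mul_Jmx (A : 'M[R]_N) :
  (forall i, \sum_j A i j = 1) -> A *m @Jmx R n = @Jmx R n.
Proof.
move=> rsA; apply/matrixP => i j; rewrite mxE.
under eq_bigr do rewrite Jmx_entry.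
by rewrite -mulr_suml rsA mul1r Jmx_entry.
Qed.

Lemma Jmx_mul (A : 'M[R]_N) :
  (forall j, \sum_i A i j = 1) -> @Jmx R n *m A = @Jmx R n.
Proof.
move=> csA; apply/matrixP => i j; rewrite mxE.
under eq_bigr do rewrite Jmx_entry.
by rewrite -mulr_sumr csA mulr1 Jmx_entry.
Qed.
End Averaging.

Section Iterates.
Variables (R : realFieldType) (n : nat) (q : R).
Local Notation N := n.+1.
Variable P : 'M[R]_N.
Hypothesis P_rowsum : forall i, \sum_j P i j = 1.
Hypothesis P_sym : symmetric_mx P.
Hypothesis P_trans : transitive_mx P.

Lemma Pq_rowsum (i : 'I_N) : \sum_j Pq q P i j = 1.
Proof.
under eq_bigr do rewrite PqE.
have sum_ind : \sum_j ((i == j)%:R : R) = 1.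
  by rewrite (bigD1 i) //= eqxx big1 ?addr0 // => j; rewrite eq_sym => /negbTE->.
by rewrite big_split /= -!mulr_sumr P_rowsum sum_ind !mulr1 subrK.
Qed.

Lemma Pq_colsum (j : 'I_N) : \sum_i Pq q P i j = 1.
Proof.
by rewrite -(Pq_rowsum j); apply: eq_bigr => i _; rewrite -[in LHS]Pq_sym // mxE.
Qed.

Definition pq_poly : {poly R} := (1 - q)%:P + q *: 'X.

Lemma horner_pq_poly : horner_mx P pq_poly = Pq q P.
Proof. by rewrite rmorphD /= horner_mx_C horner_mxZ horner_mx_X /Pq scalemx1. Qed.

Lemma size_pq_poly : (size pq_poly <= 2)%N.
Proof.
apply: leq_trans (size_polyD _ _) _; rewrite geq_max (leq_trans (size_polyC_leq1 _)) //=.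
by apply: leq_trans (size_scale_leq _ _) _; rewrite size_polyX.
Qed.

Lemma Pq_Jmx_Pq : Pq q P *m @Jmx R n *m Pq q P = @Jmx R n.
Proof. by rewrite mul_Jmx ?Jmx_mul //; [exact: Pq_colsum | exact: Pq_rowsum]. Qed.

Lemma span_const_diag (p : {poly R}) (d : R) (i : 'I_N) :
  (horner_mx P p + d *: @Jmx R n) i i = (horner_mx P p + d *: @Jmx R n) ord0 ord0.
Proof. by rewrite !mxE horner_transitive_diag // !Jmx_entry. Qed.

Lemma Xt_span (t : nat) : exists2 p : {poly R}, (size p <= (2 * t).+1)%N &
  exists d, Xt q P t = horner_mx P p + d *: @Jmx R n.
Proof.
elim: t => [|t [p size_p [d Xt_eq]]].
  exists 1; first by rewrite size_poly1.
  by exists (-1); rewrite scaleN1r rmorph1.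
set r := Xt q P t ord0 ord0.
pose p' := pq_poly * p * pq_poly + (q ^+ 2 * r) *: (1 - 'X^2).
exists p'.
  apply: leq_trans (size_polyD _ _) _; rewrite geq_max; apply/andP; split.
    have := size_pq_poly; have := size_polyMleq pq_poly p.
    have := size_polyMleq (pq_poly * p) pq_poly; lia.
  apply: leq_trans (size_scale_leq _ _) _.
  apply: leq_trans (size_polyD _ _) _.
  by rewrite size_polyN size_polyXn size_poly1 geq_max; apply/andP; split; lia.
exists d.
have diag_r i : Xt q P t i i = r by rewrite /r Xt_eq span_const_diag.
rewrite [Xt _ _ t.+1]/= (PhiAdj_const_diag _ _ _ diag_r) // Xt_eq.
rewrite (mulmxDr (Pq q P)) (mulmxDl _ _ (Pq q P)).
rewrite -scalemxAr -scalemxAl Pq_Jmx_Pq addrAC.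
rewrite /p' rmorphD /= horner_mxZ !rmorphM /= horner_pq_poly rmorphB /=.
by rewrite (rmorph1 (horner_mx P)) rmorphXn /= horner_mx_X -!mulmxE.
Qed.

End Iterates.

Theorem lemma2 (R : realFieldType) (n : nat) (P : 'M[R]_n.+1) (q : R) :
  row_stochastic P -> 0 <= q <= 1 ->
  symmetric_mx P -> transitive_mx P ->
  forall t : nat,
    [/\ (exists (c : 'I_(2 * t).+1 -> R) (d : R),
           Xt q P t = \sum_(k < (2 * t).+1) c k *: P ^+ k + d *: @Jmx R n),
        (exists r : R, forall i, Xt q P t i i = r) &
        Xt q P t.+1 = Pq q P *m Xt q P t *m Pq q P
                      + (q ^+ 2 * Xt q P t ord0 ord0) *: (1%:M - P ^+ 2)].
Proof.
move=> [_ P_rowsum] _ P_sym P_trans t.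
have [p size_p [d Xt_eq]] := Xt_span q P_rowsum P_sym P_trans t.
have diag_X i : Xt q P t i i = Xt q P t ord0 ord0.
  by rewrite Xt_eq span_const_diag.
split.
- by exists (fun k => p`_k), d; rewrite Xt_eq (horner_mx_sum P size_p).
- by exists (Xt q P t ord0 ord0).
- exact: PhiAdj_const_diag.
Qed.
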